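(* Let $r\ge 1$ and let $M_s=(V_s=\{s_1,\dots,s_r\},w_s)$ and $M_t=(V_t=\{t_1,\dots,t_r\},w_t)$ be metric spaces. Define $M_{st}=(\{1,\dots,r\},l)$ with $l(i,j)\coloneqq w_s(s_i,s_j)+w_t(t_i,t_j)$. Let $T^*_s$ be a minimum-weight TSP tour in $M_s$ and $T^*_t$ a minimum-weight TSP tour in $M_t$. Then there exists a TSP tour $T$ in $M_{st}$ with $$l(T)\le 2\sqrt{r-1}\,\big(w_s(T^*_s)+w_t(T^*_t)\big).$$
   Context: A TSP tour in a finite metric space on a point set $P$ is a cyclic ordering $v_1v_2\dots v_k$ of all points of $P$ (each exactly once); its weight is the sum of the distances $d(v_1,v_2)+d(v_2,v_3)+\dots+d(v_{k-1},v_k)+d(v_k,v_1)$. *)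

From HB Require Import structures.
From mathcomp Require Import all_boot all_order all_algebra all_fingroup.
From mathcomp Require Import reals.
Set Implicit Arguments. Unset Strict Implicit. Unset Printing Implicit Defensive.
Import Order.TTheory GRing.Theory Num.Theory.
Local Open Scope ring_scope.

(* A finite metric space on r points, the points being indexed by 'I_r
   (the points s_1..s_r are pairwise distinct, so distance 0 iff same index). *)
Definition is_metric (R : realType) (r : nat) (d : 'I_r -> 'I_r -> R) : Prop :=
  [/\ forall x y, 0 <= d x y,
      forall x y, (d x y == 0) = (x == y),
      forall x y, d x y = d y x &
      forall x y z, d x z <= d x y + d y z].

(* A TSP tour v_1 ... v_r is a cyclic ordering of all points, represented by a
   permutation p (v_{k+1} = p k); its weight is the sum of the distances between
   consecutive points, including the closing edge d(v_r, v_1). *)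
Definition tour_weight (R : realType) (r : nat) (d : 'I_r -> 'I_r -> R)
    (p : 'S_r) : R :=
  \sum_(k < r) d (p k) (p (ordS k)).

Definition is_min_tour (R : realType) (r : nat) (d : 'I_r -> 'I_r -> R)
    (p : 'S_r) : Prop :=
  forall q : 'S_r, tour_weight d p <= tour_weight d q.

(* Cut the tour [Ts] into blocks of [m] consecutive points and let [T] visit
   the blocks in the order of [Ts], each block in the order of [Tt].  Within a
   block a [ws]-step stays inside the block's arc of [Ts], so these steps cost
   at most [m * ws(Ts)] in total, while the [wt]-steps telescope along [Tt];
   each of the at most [(r-1)/m] block changes costs at most
   [ws(Ts)/2 + wt(Tt)].  Taking [m = floor (sqrt (r-1))] gives the bound when
   [m >= 3]; for smaller [r] the tour [Ts] itself works, because every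
   [wt]-edge is at most [wt(Tt)/2]. *)

From mathcomp Require Import all_boot all_order all_algebra all_fingroup.
From mathcomp Require Import reals.
From mathcomp Require Import zify lra.
Set Implicit Arguments. Unset Strict Implicit. Unset Printing Implicit Defensive.
Import Order.TTheory GRing.Theory Num.Theory.
Local Open Scope ring_scope.

Section Metric.
Variables (R : realType) (r : nat) (d : 'I_r -> 'I_r -> R).
Hypothesis hd : is_metric d.

Lemma metric_ge0 x y : 0 <= d x y. Proof. by case: hd. Qed.

Lemma metric_xx x : d x x = 0.
Proof. by case: hd => _ d0 _ _; apply/eqP; rewrite d0. Qed.

Lemma metric_sym x y : d x y = d y x. Proof. by case: hd. Qed.

Lemma metric_triangle y x z : d x z <= d x y + d y z. Proof. by case: hd. Qed.

End Metric.

Lemma ordS_inord n i : (i < n)%N -> ordS (inord i : 'I_n.+1) = inord i.+1.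
Proof.
by move=> lt_in; apply: val_inj; rewrite /= !inordK ?modn_small //; lia.
Qed.

Lemma ordS_inord_max n : ordS (inord n : 'I_n.+1) = inord 0.
Proof. by apply: val_inj; rewrite /= !inordK ?modnn. Qed.

Lemma card_divn_eq N m c :
  (0 < m)%N -> (#|[set i : 'I_N | (i %/ m)%N == c]| <= m)%N.
Proof.
move=> m_gt0; pose mod_m (i : 'I_N) : 'I_m := Ordinal (ltn_pmod i m_gt0).
rewrite -(card_in_imset (f := mod_m)); first by rewrite -[leqRHS](card_ord m) max_card.
move=> i j; rewrite !inE => /eqP div_i /eqP div_j /(congr1 val) /= mod_ij.
by apply: val_inj; rewrite /= (divn_eq i m) (divn_eq j m) div_i div_j mod_ij.
Qed.

Section Tour.
Variables (R : realType) (n : nat) (d : 'I_n.+1 -> 'I_n.+1 -> R) (p : 'S_n.+1).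
Hypothesis hd : is_metric d.

Local Notation W := (tour_weight d p).

Definition tour_edge (i : nat) : R := d (p (inord i)) (p (ordS (inord i))).

Definition tour_arc (i : nat) : R := \sum_(0 <= j < i) tour_edge j.

Definition tour_pos (u : 'I_n.+1) : nat := (p^-1)%g u.

Lemma tour_weight_arc : W = tour_arc n.+1.
Proof.
by rewrite /tour_arc big_mkord; apply: eq_bigr => i _; rewrite /tour_edge inord_val.
Qed.

Lemma tour_arc0 : tour_arc 0 = 0.
Proof. by rewrite /tour_arc big_geq. Qed.

Lemma tour_arcS i : tour_arc i.+1 = tour_arc i + tour_edge i.
Proof. by rewrite /tour_arc big_nat_recr. Qed.

Lemma tour_arc_le : {homo tour_arc : i j / (i <= j)%N >-> i <= j}.
Proof.
apply: homo_leq => [x|y x z|i]; [exact: lexx | exact: le_trans |].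
by rewrite tour_arcS lerDl; apply: metric_ge0.
Qed.

Lemma tour_arc_ge0 i : 0 <= tour_arc i.
Proof. by rewrite -tour_arc0; apply: tour_arc_le. Qed.

Lemma tour_weight_ge0 : 0 <= W.
Proof. by rewrite tour_weight_arc; apply: tour_arc_ge0. Qed.

Lemma tour_weight_path :
  W = \sum_(0 <= i < n) d (p (inord i)) (p (inord i.+1))
      + d (p (inord n)) (p (inord 0)).
Proof.
rewrite tour_weight_arc tour_arcS /tour_arc /tour_edge ordS_inord_max; congr (_ + _).
by apply: eq_big_nat => i /andP[_ lt_in]; rewrite ordS_inord.
Qed.

Lemma tour_posK u : p (inord (tour_pos u)) = u.
Proof. by rewrite /tour_pos inord_val permKV. Qed.

Lemma tour_pos_le u : (tour_pos u <= n)%N.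
Proof. by rewrite -ltnS ltn_ord. Qed.

Lemma dist_le_arc_inord i j : (i <= j <= n)%N ->
  d (p (inord i)) (p (inord j)) <= tour_arc j - tour_arc i.
Proof.
elim: j => [|j IHj]; first by rewrite leqn0 => /andP[/eqP-> _]; rewrite metric_xx // subrr.
rewrite leq_eqVlt => /andP[/predU1P[-> _|lt_ij le_jn]]; first by rewrite metric_xx // subrr.
apply: le_trans (metric_triangle hd (p (inord j)) _ _) _.
rewrite tour_arcS addrAC lerD //; first by apply: IHj; lia.
by rewrite /tour_edge ordS_inord.
Qed.

Lemma dist_le_arc u v : (tour_pos u <= tour_pos v)%N ->
  d u v <= tour_arc (tour_pos v) - tour_arc (tour_pos u).
Proof.
move=> le_uv; rewrite -{1}(tour_posK u) -{1}(tour_posK v).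
by apply: dist_le_arc_inord; rewrite le_uv tour_pos_le.
Qed.

Lemma dist_le_wrap_arc u v :
  d u v <= W - tour_arc (tour_pos u) + tour_arc (tour_pos v).
Proof.
case: (leqP (tour_pos u) (tour_pos v)) => [le_uv|_].
  by have := dist_le_arc le_uv; have := tour_weight_ge0; lra.
rewrite -{1}(tour_posK u) -{1}(tour_posK v).
apply: le_trans (metric_triangle hd (p (inord n)) _ _) _.
have arc_un : (tour_pos u <= n <= n)%N by rewrite tour_pos_le leqnn.
apply: le_trans (lerD (dist_le_arc_inord arc_un) (metric_triangle hd (p (inord 0)) _ _)) _.
have := @dist_le_arc_inord 0 (tour_pos v) (tour_pos_le v).
rewrite tour_posK tour_weight_arc tour_arcS tour_arc0 /tour_edge ordS_inord_max.
lra.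
Qed.

Lemma dist_le_half_weight u v : d u v <= W / 2.
Proof.
wlog le_uv : u v / (tour_pos u <= tour_pos v)%N.
  by move=> W_uv; case: (leqP (tour_pos u) (tour_pos v)) => [|/ltnW];
    [apply: W_uv | rewrite metric_sym //; apply: W_uv].
by have := dist_le_arc le_uv; have := dist_le_wrap_arc v u; rewrite metric_sym //; lra.
Qed.

Lemma dist_le_arc_level (x y : nat) u v :
  (x <= y)%N -> (x = y -> tour_pos u <= tour_pos v)%N ->
  d u v <= tour_arc (tour_pos v) - tour_arc (tour_pos u) + W * (y%:R - x%:R).
Proof.
rewrite leq_eqVlt => /predU1P[-> /(_ erefl) le_uv | lt_xy _].
  by rewrite subrr mulr0 addr0; apply: dist_le_arc.
have : x%:R + 1 <= y%:R :> R by rewrite natr1 ler_nat.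
by have := dist_le_wrap_arc u v; have := tour_weight_ge0; nra.
Qed.

Variable m : nat.
Hypothesis m_gt0 : (0 < m)%N.

Local Notation block u := (tour_pos u %/ m)%N.

Definition block_arc (c : nat) : R := \sum_(j < n.+1 | (j %/ m)%N == c) tour_edge j.

Lemma block_arc_ge0 c : 0 <= block_arc c.
Proof. by apply: sumr_ge0 => j _; apply: metric_ge0. Qed.

Lemma dist_le_block_arc u v : block u = block v -> d u v <= block_arc (block u).
Proof.
wlog le_uv : u v / (tour_pos u <= tour_pos v)%N.
  move=> W_uv; case: (leqP (tour_pos u) (tour_pos v)) => [|/ltnW le_vu eq_uv].
    exact: W_uv.
  by rewrite metric_sym // eq_uv; apply: W_uv.
move=> eq_uv; apply: (le_trans (dist_le_arc le_uv)).
have in_block j : (tour_pos u <= j < tour_pos v)%N -> (j %/ m)%N == block u.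
  case/andP=> le_uj lt_jv; rewrite eqn_leq {1}eq_uv.
  by rewrite !leq_div2r // ltnW.
rewrite /tour_arc (big_cat_nat (leq0n _) le_uv) /= addrC addrK.
rewrite (big_nat_widen _ _ _ _ _ (leqW (tour_pos_le v))) (big_nat_widenl _ 0) //.
rewrite /block_arc -(big_mkord (fun j => (j %/ m)%N == _) tour_edge).
rewrite big_mkcond [leRHS]big_mkcond; apply: ler_sum_nat => j _ /=.
case: ifP => [/andP[lt_jv le_uj] | _]; first by rewrite in_block ?le_uj.
by case: ifP => _; [apply: metric_ge0 | apply: lexx].
Qed.

Lemma dist_le_block_step u v : (block u <= block v)%N ->
  d u v <= block_arc (block u) + W / 2 * ((block v)%:R - (block u)%:R).
Proof.
rewrite leq_eqVlt => /predU1P[eq_uv | lt_uv].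
  by rewrite -eq_uv subrr mulr0 addr0; apply: dist_le_block_arc.
have : (block u)%:R + 1 <= (block v)%:R :> R by rewrite natr1 ler_nat.
have := dist_le_half_weight u v; have := block_arc_ge0 (block u).
by have := tour_weight_ge0; nra.
Qed.

Lemma sum_block_arc (q : 'S_n.+1) : \sum_i block_arc (block (q i)) <= W *+ m.
Proof.
have reindex F (f : 'S_n.+1) : \sum_i F (f i) = \sum_i F i :> R.
  by rewrite [RHS](reindex_inj (@perm_inj _ f)).
rewrite (reindex (fun v => block_arc (block v))).
rewrite -(reindex (fun v => block_arc (block v)) p).
under eq_bigr => i _ do rewrite /tour_pos permK.
rewrite /block_arc (exchange_big_dep xpredT) //=.
rewrite tour_weight_arc /tour_arc big_mkord -sumrMnl.
apply: ler_sum => j _.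
rewrite (eq_bigl [in [set i : 'I_n.+1 | (i %/ m)%N == (j %/ m)%N]]) => [|i]; last first.
  by rewrite inE eq_sym.
by rewrite sumr_const ler_wpMn2l ?card_divn_eq //; apply: metric_ge0.
Qed.

End Tour.

Lemma exists_sorted_perm n (key : 'I_n.+1 -> nat) :
  exists T : 'S_n.+1, forall i j : 'I_n.+1, (i <= j)%N -> (key (T i) <= key (T j))%N.
Proof.
pose s := sort (relpre key leq) (enum 'I_n.+1).
have size_s : size s = n.+1 by rewrite size_sort size_enum_ord.
have uniq_s : uniq s by rewrite sort_uniq enum_uniq.
have nth_inj : injective (fun i : 'I_n.+1 => nth ord0 s i).
  by move=> i j /eqP; rewrite nth_uniq ?size_s // => /eqP/val_inj.
have sorted_s : sorted (relpre key leq) s by apply: sort_sorted => u v; apply: leq_total.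
exists (perm nth_inj) => i j le_ij; rewrite !permE.
apply: (sorted_leq_nth _ _ _ sorted_s); rewrite ?inE ?size_s //.
- by move=> v u w; apply: leq_trans.
- by move=> u; apply: leqnn.
Qed.

Lemma leq_mixed_radix (N x1 x2 y1 y2 : nat) : (y1 <= N)%N -> (y2 <= N)%N ->
  (x1 * N.+1 + y1 <= x2 * N.+1 + y2)%N -> (x1 <= x2)%N /\ (x1 = x2 -> y1 <= y2)%N.
Proof.
move=> le_y1N le_y2N le_12; split; last by move=> eq_x; rewrite eq_x leq_add2l in le_12.
rewrite leqNgt; apply/negP => lt_x21.
have : (x2.+1 * N.+1 <= x1 * N.+1)%N by rewrite leq_mul2r lt_x21 orbT.
by rewrite mulSn; lia.
Qed.

Section BlockTour.
Variables (R : realType) (n : nat) (ws wt : 'I_n.+1 -> 'I_n.+1 -> R).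
Variables (Ts Tt : 'S_n.+1) (m : nat).
Hypotheses (hws : is_metric ws) (hwt : is_metric wt) (m_gt0 : (0 < m)%N).

Local Notation a := (tour_weight ws Ts).
Local Notation b := (tour_weight wt Tt).
Local Notation block u := (tour_pos Ts u %/ m)%N.

Lemma block_tour_weight_le :
  exists T : 'S_n.+1, tour_weight (fun i j => ws i j + wt i j) T
    <= a *+ m + (a / 2 + b) * ((n %/ m)%:R + 1).
Proof.
have [T sorted_T] := exists_sorted_perm (fun u => block u * n.+1 + tour_pos Tt u)%N.
exists T; pose g i := T (inord i).
pose level i : R := (block (g i))%:R.
pose phi i := tour_arc wt Tt (tour_pos Tt (g i)) + (a / 2 + b) * level i.
have step i : (0 <= i < n)%N -> ws (g i) (g i.+1) + wt (g i) (g i.+1)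
    <= block_arc ws Ts m (block (g i)) + (phi i.+1 - phi i).
  move=> /andP[_ lt_in].
  have le_i : (@inord n i <= @inord n i.+1)%N by rewrite !inordK //; lia.
  have [le_block le_pos] := leq_mixed_radix (tour_pos_le Tt (g i))
    (tour_pos_le Tt (g i.+1)) (sorted_T _ _ le_i).
  have := dist_le_block_step hws le_block.
  have := dist_le_arc_level hwt le_block le_pos.
  by rewrite /phi /level; lra.
have closing : ws (g n) (g 0) + wt (g n) (g 0) <= a / 2 + b
    - tour_arc wt Tt (tour_pos Tt (g n)) + tour_arc wt Tt (tour_pos Tt (g 0)).
  have := dist_le_half_weight Ts hws (g n) (g 0).
  by have := dist_le_wrap_arc Tt hwt (g n) (g 0); lra.
rewrite tour_weight_path -/g; apply: le_trans (lerD (ler_sum_nat step) closing) _.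
rewrite big_split telescope_sumr //= /phi.
have sum_blocks : \sum_(0 <= i < n) block_arc ws Ts m (block (g i)) <= a *+ m.
  apply: le_trans (sum_block_arc Ts hws m_gt0 T).
  rewrite [leRHS](eq_bigr (fun i : 'I_n.+1 => block_arc ws Ts m (block (g i)))).
    by rewrite big_mkord big_ord_recr /= lerDl block_arc_ge0.
  by move=> i _; rewrite /g inord_val.
have c_ge0 : 0 <= a / 2 + b.
  by rewrite addr_ge0 ?divr_ge0 ?tour_weight_ge0.
have level_n : (a / 2 + b) * level n <= (a / 2 + b) * (n %/ m)%:R.
  by rewrite ler_wpM2l // ler_nat leq_div2r ?tour_pos_le.
have level_0 : 0 <= (a / 2 + b) * level 0 by rewrite mulr_ge0.
lra.
Qed.

End BlockTour.

Lemma tour_weightD (R : realType) r (d1 d2 : 'I_r -> 'I_r -> R) (p : 'S_r) :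
  tour_weight (fun i j => d1 i j + d2 i j) p = tour_weight d1 p + tour_weight d2 p.
Proof. exact: big_split. Qed.

Lemma tour_weight_ord1 (R : realType) (d : 'I_1 -> 'I_1 -> R) (p : 'S_1) :
  is_metric d -> tour_weight d p = 0.
Proof. by move=> hd; apply: big1 => i _; rewrite !ord1 metric_xx. Qed.

Lemma tour_weight_le_half (R : realType) n (d : 'I_n.+1 -> 'I_n.+1 -> R) (p q : 'S_n.+1) :
  is_metric d -> tour_weight d q <= n.+1%:R * (tour_weight d p / 2).
Proof.
move=> hd; apply: le_trans (_ : \sum_(i < n.+1) (tour_weight d p / 2) <= _).
  by apply: ler_sum => i _; apply: dist_le_half_weight.
by rewrite sumr_const card_ord mulr_natl.
Qed.

Lemma few_points_bound (R : realType) (n : nat) (a b : R) :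
  0 <= a -> 0 <= b -> (1 <= n)%N -> Num.sqrt (n%:R : R) < 3 ->
  a + n.+1%:R * (b / 2) <= 2 * Num.sqrt (n%:R : R) * (a + b).
Proof.
move=> a_ge0 b_ge0 n_ge1 lt_s3.
have s_ge1 : 1 <= Num.sqrt (n%:R : R) by rewrite -{1}sqrtr1 ler_wsqrtr // ler1n.
have : n.+1%:R <= 4 * Num.sqrt (n%:R : R).
  by have := sqr_sqrtr (ler0n R n); rewrite -natr1; nra.
nra.
Qed.

Lemma block_bound_le_sqrt (R : realType) (n k : nat) (a b : R) :
  0 <= a -> 0 <= b -> (3 <= k)%N -> k%:R <= Num.sqrt (n%:R : R) < k.+1%:R ->
  a *+ k + (a / 2 + b) * ((n %/ k)%:R + 1) <= 2 * Num.sqrt (n%:R : R) * (a + b).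
Proof.
move=> a_ge0 b_ge0 k_ge3 /andP[k_le_s s_lt].
have n_lt : (n < k.+1 * k.+1)%N.
  rewrite -(ltr_nat R) natrM -(sqr_sqrtr (ler0n R n)).
  by have := sqrtr_ge0 (n%:R : R); nra.
have : (n %/ k)%:R <= k.+2%:R :> R.
  by rewrite ler_nat -ltnS ltn_divLR; nia.
have : 3 <= k%:R :> R by rewrite (ler_nat R 3).
rewrite -mulr_natr; nra.
Qed.

Theorem lemma3 (R : realType) (r : nat) (hr : (1 <= r)%N)
    (ws wt : 'I_r -> 'I_r -> R)
    (hws : is_metric ws) (hwt : is_metric wt)
    (Ts Tt : 'S_r) (hTs : is_min_tour ws Ts) (hTt : is_min_tour wt Tt) :
  exists T : 'S_r,
    tour_weight (fun i j => ws i j + wt i j) T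
      <= 2 * Num.sqrt ((r - 1)%:R) * (tour_weight ws Ts + tour_weight wt Tt).
Proof.
case: r hr ws wt hws hwt Ts Tt hTs hTt => [//|[|n]] _ ws wt hws hwt Ts Tt _ _.
  by exists Ts; rewrite tour_weightD !tour_weight_ord1 // addr0 mulr0.
rewrite subn1 /=.
have a_ge0 := tour_weight_ge0 Ts hws; have b_ge0 := tour_weight_ge0 Tt hwt.
set s := Num.sqrt (n.+1%:R : R); set k := Num.truncn s.
have /andP[k_le_s s_lt] : k%:R <= s < k.+1%:R by apply/truncn_itv/sqrtr_ge0.
have [k_lt3 | k_ge3] := ltnP k 3.
  exists Ts; rewrite tour_weightD.
  apply: le_trans (lerD (lexx _) (tour_weight_le_half Tt Ts hwt)) _.
  apply: few_points_bound => //; apply: (lt_le_trans s_lt).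
  by rewrite (ler_nat R _ 3).
have [T le_T] := block_tour_weight_le Ts Tt hws hwt (leq_ltn_trans (leq0n 2) k_ge3).
by exists T; apply: (le_trans le_T); apply: block_bound_le_sqrt; rewrite ?k_le_s.
Qed.
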